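(* There exists a history-deterministic generalised coBüchi automaton $\mathcal{A}$ over an alphabet $\Sigma$ such that every history-deterministic generalised Büchi automaton recognising $\Sigma^\omega\setminus\mathcal{L}(\mathcal{A})$ has strictly more states than $\mathcal{A}$.
   Context: An automaton is a tuple $(Q,\Sigma,q_{\mathrm{init}},\Delta,\Gamma,\mathrm{col},W)$ with finite state set $Q$, finite input alphabet $\Sigma$, initial state, transitions $\Delta\subseteq Q\times\Sigma\times Q$, output alphabet $\Gamma$, labelling $\mathrm{col}:\Delta\to\Gamma$, acceptance condition $W\subseteq\Gamma^\omega$. A run on $w=a_1a_2\cdots$ is a sequence $(q_0,a_1,q_1)(q_1,a_2,q_2)\cdots$ of transitions with $q_0=q_{\mathrm{init}}$, accepting if its label sequence is in $W$; $\mathcal{L}(\mathcal{A})$ is the set of words having an accepting run. With a finite set $C$ of output colours and $\Gamma=2^C$: generalised Büchi means $W=\{x : \text{every } c\in C \text{ occurs in infinitely many letters of } x\}$; generalised coBüchi means $W=\{x : \text{some } c\in C \text{ occurs in only finitely many letters of } x\}$. A resolver is a map $\sigma:\Sigma^+\to\Delta$ such that for every $w=a_0a_1\cdots$, $\sigma(a_0)\sigma(a_0a_1)\cdots$ is a run on $w$, accepting whenever $w\in\mathcal{L}(\mathcal{A})$; an automaton is history-deterministic if it has a resolver. The number of states is $|Q|$. *)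

From mathcomp Require Import all_boot.
Set Implicit Arguments. Unset Strict Implicit. Unset Printing Implicit Defensive.

(* An automaton over the finite input alphabet Sigma, with finite state set
   [st], colour set [colours] (output alphabet Gamma = 2^colours), initial
   state, transition relation Delta ⊆ Q × Σ × Q, labelling col : Delta -> Gamma
   (given as a function on all triples; only its values on Delta matter) and
   acceptance condition W ⊆ Gamma^ω. *)
Record automaton (Sigma : finType) := Automaton {
  st : finType;
  colours : finType;
  init : st;
  delta : pred (st * Sigma * st);
  col : st * Sigma * st -> {set colours};
  acc : (nat -> {set colours}) -> Prop
}.

Arguments delta {Sigma} a _.
Arguments col {Sigma} a _.
Arguments acc {Sigma} a _.
Arguments init {Sigma} a.
Arguments st {Sigma} a.
Arguments colours {Sigma} a.

Definition word (Sigma : finType) := nat -> Sigma.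

Definition is_run (Sigma : finType) (A : automaton Sigma) (w : word Sigma)
  (r : nat -> st A * Sigma * st A) : Prop :=
  (r 0).1.1 = init A /\
  forall i, delta A (r i) /\ (r i).1.2 = w i /\ (r i).2 = (r i.+1).1.1.

Arguments is_run {Sigma} A w r.

Definition accepting_run (Sigma : finType) (A : automaton Sigma)
  (r : nat -> st A * Sigma * st A) : Prop :=
  acc A (fun i => col A (r i)).

Arguments accepting_run {Sigma} A r.

Definition accepts (Sigma : finType) (A : automaton Sigma) (w : word Sigma) : Prop :=
  exists r, is_run A w r /\ accepting_run A r.

Arguments accepts {Sigma} A w.

Definition genBuchi_cond (C : finType) (x : nat -> {set C}) : Prop :=
  forall c : C, forall n, exists2 m, n <= m & c \in x m.

Definition genCoBuchi_cond (C : finType) (x : nat -> {set C}) : Prop :=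
  exists c : C, exists n, forall m, n <= m -> c \notin x m.

Definition is_genBuchi (Sigma : finType) (A : automaton Sigma) : Prop :=
  forall x, acc A x <-> genBuchi_cond x.

Definition is_genCoBuchi (Sigma : finType) (A : automaton Sigma) : Prop :=
  forall x, acc A x <-> genCoBuchi_cond x.

Definition prefix (Sigma : finType) (w : word Sigma) (n : nat) : seq Sigma :=
  mkseq w n.

(* sigma : Σ^+ -> Δ (values on the empty word are irrelevant) *)
Definition is_resolver (Sigma : finType) (A : automaton Sigma)
  (sigma : seq Sigma -> st A * Sigma * st A) : Prop :=
  forall w : word Sigma,
    let r := fun i => sigma (prefix w i.+1) in
    is_run A w r /\ (accepts A w -> accepting_run A r).

Arguments is_resolver {Sigma} A sigma.

Definition history_deterministic (Sigma : finType) (A : automaton Sigma) : Prop :=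
  exists sigma, is_resolver A sigma.

Arguments history_deterministic {Sigma} A.
Arguments is_genBuchi {Sigma} A.
Arguments is_genCoBuchi {Sigma} A.

(* [phase_automaton] keeps a phase, a or b: reading a or b forces the phase of
   that letter, reading c lets it choose, and entering phase q by reading its
   letter costs colour q.  Each occurrence of ab (resp. ba) costs a colour, and a
   colour can be avoided from some point on exactly when ab or ba occurs only
   finitely often.  A resolver that, on c, returns to the phase in which the latest
   ab/ba started achieves this, so the automaton is history-deterministic.

   Let B be a generalised Büchi automaton with at most two states recognising the
   complement, and take an accepting run on (abcbacc)^ω.  Generalised Büchi
   acceptance is monotone in the set T of transitions used infinitely often, so
   every run that eventually cycles through all of T is accepting.  An exhaustive
   check of the 2^12 transition sets of a two-state automaton over {a, b, c} shows
   that whenever T can arise from a run on (abcbacc)^ω, it carries a closed walk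
   through all of its transitions that never reads ab, or one that never reads ba.
   Splicing that walk onto the run yields a word accepted both by B and by
   [phase_automaton]. *)

From HB Require Import structures.
From mathcomp Require Import all_boot.
From Stdlib Require Import Classical.

Set Implicit Arguments.
Unset Strict Implicit.
Unset Printing Implicit Defensive.

(** * Recurrence and closed walks *)

Lemma eventually_recurrent (X : finType) (f : nat -> X) :
  exists N, forall i, N <= i -> forall n, exists2 j, n <= j & f j = f i.
Proof.
have [N HN] : exists N, forall x, x \in enum X ->
    (forall n, exists2 j, n <= j & f j = x) \/ (forall j, N <= j -> f j != x).
  elim: (enum X) => [|x s [N HN]]; first by exists 0.
  case: (classic (forall n, exists2 j, n <= j & f j = x)) => [inf_x | fin_x].
    by exists N => y; rewrite inE => /orP [/eqP -> | /HN]; [left | ].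
  have [M HM] : exists M, forall j, M <= j -> f j != x.
    apply: NNPP => noM; apply: fin_x => n; apply: NNPP => non; apply: noM.
    by exists n => j hj; apply/eqP => fj; apply: non; exists j.
  exists (maxn N M) => y; rewrite inE => /orP [/eqP -> | /HN [inf_y | fin_y]].
  - by right => j; rewrite geq_max => /andP [_ /HM].
  - by left.
  - by right => j; rewrite geq_max => /andP [/fin_y].
exists N => i hi; case: (HN (f i) (mem_enum _ _)) => // /(_ i hi).
by rewrite eqxx.
Qed.

Lemma last_signal_stable (s : nat -> option bool) (m : nat -> bool) q n :
  (forall i, m i.+1 = if s i is Some p then p else m i) ->
  (forall i, n <= i -> s i != Some q) ->
  exists p n', forall i, n' <= i -> m i = p /\ s i != Some (~~ p).
Proof.
move=> mS sq; case: (classic (exists2 j, n <= j & s j = Some (~~ q))) => [[j hj sj] | none].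
  have n_le d : n <= j.+1 + d by rewrite (leq_trans hj) // (leq_trans (leqnSn j)) ?leq_addr.
  exists (~~ q), j.+1 => i /subnKC <-; rewrite negbK; split; last exact: sq.
  elim: (_ - _) => [|d IH]; first by rewrite addn0 mS sj.
  rewrite addnS mS; move: (sq _ (n_le d)).
  by case: (s _) => [[]|] //=; clear sj sq; case: q IH.
have sN i : n <= i -> s i = None.
  move=> hi; move: (sq i hi); case si: (s i) => [p|] // neq.
  by case: none; exists i => //; rewrite si; clear sq si; case: p q neq => -[].
exists (m n), n => i /subnKC <-; rewrite sN ?leq_addr //; split => //.
by elim: (_ - _) => [|d IH]; rewrite ?addn0 // addnS mS sN ?leq_addr.
Qed.

Fixpoint subseqs (X : Type) (s : seq X) : seq (seq X) :=
  if s is x :: s' then let r := subseqs s' in r ++ map (cons x) r else [:: [::]].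

Lemma exists_in_subseqs (X : eqType) (P : X -> Prop) (s : seq X) :
  exists2 s', s' \in subseqs s & forall x, x \in s' <-> x \in s /\ P x.
Proof.
elim: s => [|y s [s' s's Hs']]; first by exists [::] => // x; split => // -[].
case: (classic (P y)) => Py.
  exists (y :: s'); first by rewrite /= mem_cat map_f ?orbT.
  move=> x; rewrite !inE; case: eqP => [-> | _] //=; exact: Hs'.
exists s'; first by rewrite /= mem_cat s's.
move=> x; rewrite Hs' inE; case: eqP => [-> | _] //=.
by split=> [[] | [_]].
Qed.

Lemma mem_dfs (V : finType) (g : V -> seq V) (e : rel V) n x y :
  #|V| = n -> grel g =2 e -> (y \in dfs g n [::] x) = connect e x y.
Proof.
move=> <- ge; apply/dfsP/connectP => -[p xp ->]; exists p => //.
  by rewrite -(eq_path ge).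
by rewrite (eq_path ge).
Qed.

Lemma covering_closed_walk (X : finType) (e : rel X) x (S : seq X) :
  (forall y, y \in S -> connect e x y /\ exists2 z, e y z & connect e z x) ->
  exists W, [/\ path e x W, last x W = x, {subset S <= W} & (S != [::] -> W != [::])].
Proof.
elim: S => [|y S IH] HS; first by exists [::].
have [W [eW lW SW _]] := IH (fun z zS => HS z (mem_behead (s := y :: S) zS)).
have [/connectP [p ep yp] [z yz /connectP [q eq zq]]] := HS y (mem_head y S).
exists (p ++ z :: q ++ W); split => //.
- by rewrite cat_path /= cat_path -yp ep yz eq -zq eW.
- by rewrite last_cat /= last_cat -zq.
- move=> u; rewrite inE => /orP [/eqP -> | /SW uW].
    2: by rewrite !(mem_cat, inE) uW !orbT.
  have : y \in x :: p by rewrite yp mem_last.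
  rewrite inE mem_cat => /orP [/eqP -> | -> //].
  by rewrite -cat_cons mem_cat {2}zq mem_last !orbT.
- by case: p {ep yp}.
Qed.

Definition cyclic_walk (X : Type) (x : X) (W : seq X) (j : nat) : X :=
  if j is j'.+1 then nth x W (j' %% size W) else x.

Section CyclicWalk.
Variables (X : eqType) (x : X) (W : seq X).
Hypothesis W_neq0 : W != [::].

Let W_gt0 : 0 < size W. Proof. by rewrite lt0n size_eq0. Qed.

Lemma cyclic_walk_step (e : rel X) :
  path e x W -> last x W = x -> forall j, e (cyclic_walk x W j) (cyclic_walk x W j.+1).
Proof.
move=> /(pathP x) eW lW [|j] /=; first by rewrite mod0n; exact: (eW 0).
rewrite -addn1 -modnDml addn1; have := ltn_pmod j W_gt0.
set i := j %% size W => lt_i; case: (ltngtP i.+1 (size W)) => [lt | | eq].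
- by rewrite modn_small //; exact: (eW i.+1).
- by rewrite ltnNge lt_i.
rewrite eq modnn (_ : nth x W i = x); first exact: (eW 0).
by rewrite -[RHS]lW (last_nth x) -eq.
Qed.

Lemma cyclic_walk_mem j : cyclic_walk x W j \in x :: W.
Proof. by case: j => [|j]; rewrite ?mem_head // inE mem_nth ?orbT ?ltn_pmod. Qed.

Lemma cyclic_walk_recurrent y :
  y \in W -> forall n, exists2 j, n <= j & cyclic_walk x W j = y.
Proof.
move=> yW n; exists (index y W + n * size W).+1.
  by apply: leq_trans (leqnSn _); rewrite (leq_trans (leq_pmulr n W_gt0)) ?leq_addl.
by rewrite /= addnC modnMDl modn_small ?index_mem ?nth_index.
Qed.

End CyclicWalk.

(** * Runs of generalised Büchi automata and resolvers *)

Lemma genBuchi_cond_recurrent (C : finType) (x y : nat -> {set C}) i0 :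
  genBuchi_cond x -> (forall i n, i0 <= i -> exists2 j, n <= j & y j = x i) ->
  genBuchi_cond y.
Proof.
move=> hx hy col n; have [m] := hx col (maxn n i0); rewrite geq_max => /andP [_ hm] cm.
by have [j hj yj] := hy m n hm; exists j; rewrite ?yj.
Qed.

Definition splice (X : Type) (r : nat -> X) (i0 : nat) (z : nat -> X) (j : nat) : X :=
  if j < i0 then r j else z (j - i0).

Section Splice.
Variables (Sigma : finType) (B : automaton Sigma) (r : nat -> st B * Sigma * st B).
Variables (i0 : nat) (z : nat -> st B * Sigma * st B).

Lemma splice_run w :
  is_run B w r -> z 0 = r i0 -> (forall j, delta B (z j) /\ (z j).2 = (z j.+1).1.1) ->
  is_run B (fun j => (splice r i0 z j).1.2) (splice r i0 z).
Proof.
rewrite /splice => -[r0 rS] z0 zS; split => [|j]; first by case: i0 z0 => [/= ->|].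
split; first by case: ifP => _; [case: (rS j) | case: (zS (j - i0))].
split=> //; case: (ltngtP j.+1 i0) => [_ | gt | eq].
- by case: (rS j) => _ [].
- by rewrite (@subSn i0 j gt); case: (zS (j - i0)).
- by rewrite -eq subnn z0 -eq; case: (rS j) => _ [].
Qed.

Lemma splice_accepting :
  is_genBuchi B -> accepting_run B r ->
  (forall i n, i0 <= i -> exists2 j, n <= j & z j = r i) -> accepting_run B (splice r i0 z).
Proof.
move=> hB /hB r_acc z_rec; apply/hB; apply: (genBuchi_cond_recurrent r_acc) => i n hi.
have [j hj zj] := z_rec i n hi; exists (i0 + j); first exact: leq_trans hj (leq_addl _ _).
by rewrite /splice ltnNge leq_addr /= addKn zj.
Qed.

End Splice.

Lemma prefixS (Sigma : finType) (w : word Sigma) i :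
  prefix w i.+1 = rcons (prefix w i) (w i).
Proof. exact: mkseqS. Qed.

Definition resolver_of (Sigma : finType) (A : automaton Sigma) (x0 : Sigma)
    (g : seq Sigma -> st A) (h : seq Sigma) : st A * Sigma * st A :=
  if h is x :: t then (g (belast x t), last x t, g h) else (g [::], x0, g [::]).

Section ResolverOfGuess.
Variables (Sigma : finType) (A : automaton Sigma) (x0 : Sigma) (g : seq Sigma -> st A).

Lemma resolver_of_rcons h x : resolver_of x0 g (rcons h x) = (g h, x, g (rcons h x)).
Proof. by case: h => [|y h] //=; rewrite belast_rcons last_rcons. Qed.

Lemma resolver_of_run w :
  g [::] = init A -> (forall h x, delta A (g h, x, g (rcons h x))) ->
  is_run A w (fun i => resolver_of x0 g (prefix w i.+1)).
Proof.
move=> g0 gd; split=> [|i]; first by rewrite prefixS resolver_of_rcons; exact: g0.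
rewrite prefixS resolver_of_rcons (prefixS w i.+1) resolver_of_rcons -prefixS.
by split; first by rewrite prefixS; exact: gd.
Qed.

End ResolverOfGuess.

(** * A history-deterministic generalised coBüchi automaton *)

Inductive letter := a | b | c.

Definition letter_eqb (x y : letter) : bool :=
  match x, y with a, a | b, b | c, c => true | _, _ => false end.
Lemma letter_eqP : Equality.axiom letter_eqb.
Proof. by do 2 case; constructor. Qed.
HB.instance Definition _ := hasDecEq.Build letter letter_eqP.

Definition nat_of_letter (x : letter) : nat := match x with a => 0 | b => 1 | c => 2 end.
Definition letter_of_nat (n : nat) : option letter :=
  match n with 0 => Some a | 1 => Some b | 2 => Some c | _ => None end.
Lemma nat_of_letterK : pcancel nat_of_letter letter_of_nat.
Proof. by case. Qed.
HB.instance Definition _ := PCanIsCountable nat_of_letterK.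

Lemma letter_enumP : Finite.axiom [:: a; b; c].
Proof. by case. Qed.
HB.instance Definition _ := isFinite.Build letter letter_enumP.

Definition phase_of (x : letter) : option bool :=
  match x with a => Some true | b => Some false | c => None end.

Definition switch (x y : letter) : option bool :=
  match x, y with a, b => Some true | b, a => Some false | _, _ => None end.

Lemma switch_phases x y q :
  (switch x y == Some q) = (phase_of x == Some q) && (phase_of y == Some (~~ q)).
Proof. by case: x; case: y; case: q. Qed.

Definition phase_delta (t : bool * letter * bool) : bool :=
  if phase_of t.1.2 is Some q then t.2 == q else true.

Definition phase_col (t : bool * letter * bool) : {set bool} :=
  [set q | (phase_of t.1.2 == Some q) && (q != t.1.1)].

Definition phase_automaton : automaton letter :=
  @Automaton letter bool bool true phase_delta phase_col (@genCoBuchi_cond bool).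

Definition eventually_no_switch (w : word letter) (q : bool) : Prop :=
  exists n, forall i, n <= i -> switch (w i) (w i.+1) != Some q.

Lemma switch_colour w r i q :
  is_run phase_automaton w r -> switch (w i) (w i.+1) = Some q ->
  ~~ q \in phase_col (r i.+1).
Proof.
move=> [_ r_run] /eqP; rewrite switch_phases => /andP [/eqP wi /eqP wi1].
have [d_i [l_i t_i]] := r_run i; have [_ [l_i1 _]] := r_run i.+1.
move: d_i; rewrite /= /phase_delta l_i wi => /eqP s_i1.
by rewrite inE l_i1 wi1 eqxx -t_i s_i1; case: q {wi wi1 s_i1}.
Qed.

Lemma phase_automaton_no_switch w :
  accepts phase_automaton w -> exists q, eventually_no_switch w q.
Proof.
move=> [r [r_run [p [n hn]]]]; apply: NNPP => none.
have [i hi /(switch_colour r_run)] :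
    exists2 i, n <= i & switch (w i) (w i.+1) = Some (~~ p).
  apply: NNPP => noi; apply: none; exists (~~ p), n => i hi.
  by apply/eqP => wi; apply: noi; exists i.
by rewrite negbK (negbTE (hn _ (leqW hi))).
Qed.

(* [tracker h] is the last letter of [h] (or c) and the phase in which the latest
   switch of [h] started (or true).  On c the resolver moves to that phase: the
   colour of a phase is then only paid at switches ending in it. *)
Definition tracker_step (lm : letter * bool) (x : letter) : letter * bool :=
  (x, if switch lm.1 x is Some q then q else lm.2).

Definition tracker (h : seq letter) : letter * bool := foldl tracker_step (c, true) h.

Definition guess (h : seq letter) : bool :=
  if phase_of (tracker h).1 is Some q then q else (tracker h).2.

Lemma guess_delta h x : phase_delta (guess h, x, guess (rcons h x)).
Proof. by rewrite /guess /tracker foldl_rcons; case: x. Qed.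

Definition phase_resolver : seq letter -> bool * letter * bool :=
  resolver_of (A := phase_automaton) c guess.

Lemma phase_resolver_run w :
  is_run phase_automaton w (fun i => phase_resolver (prefix w i.+1)).
Proof. exact: (@resolver_of_run _ phase_automaton c guess w (erefl true) guess_delta). Qed.

Section GuessRun.
Variable w : word letter.

Let mode i := (tracker (prefix w i.+1)).2.

Lemma tracker_prefixS i : tracker (prefix w i.+1) = (w i, mode i).
Proof. by rewrite /mode prefixS /tracker foldl_rcons. Qed.

Lemma modeS i : mode i.+1 = if switch (w i) (w i.+1) is Some q then q else mode i.
Proof.
rewrite [mode i.+1]/mode (prefixS w i.+1) /tracker foldl_rcons.
by rewrite -/(tracker _) tracker_prefixS.
Qed.

Lemma guess_colour j p :
  p \in phase_col (guess (prefix w j.+1), w j.+1, guess (prefix w j.+2)) ->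
  switch (w j) (w j.+1) = Some (~~ p) \/ mode j = ~~ p.
Proof.
rewrite inE /= /guess tracker_prefixS /= => /andP [/eqP wj1].
case wj: (phase_of (w j)) => [q|] nq.
  2: by right; move: nq {wj1}; case: (mode j); case: p.
left; apply/eqP; rewrite switch_phases wj wj1 negbK.
by move: nq; clear wj wj1; case: p; case: q.
Qed.

Lemma guess_accepting :
  (exists q, eventually_no_switch w q) ->
  genCoBuchi_cond (fun i => phase_col (phase_resolver (prefix w i.+1))).
Proof.
move=> [q [n hn]].
have [p [n' hp]] := last_signal_stable modeS hn.
exists p, n'.+1 => -[|j] // hj; rewrite prefixS /phase_resolver resolver_of_rcons -prefixS.
have [mp sp] := hp j hj; apply/negP => /guess_colour [sw | mj].
  by rewrite sw eqxx in sp.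
by move: mp; rewrite mj; case: (p).
Qed.

End GuessRun.

Lemma phase_automaton_accepts w :
  (exists q, eventually_no_switch w q) -> accepts phase_automaton w.
Proof.
by move=> sw; exists (fun i => phase_resolver (prefix w i.+1)); split;
  [exact: phase_resolver_run | exact: guess_accepting].
Qed.

Lemma phase_automaton_hd : history_deterministic phase_automaton.
Proof.
exists phase_resolver => w; split; first exact: phase_resolver_run.
by move=> /phase_automaton_no_switch; exact: guess_accepting.
Qed.

(** * The finite check for two-state automata *)

(* Transitions of a two-state automaton over [letter], with states coded in [bool],
   and states paired with a position modulo 7 in (abcbacc)^ω.  The aliases carry
   their own instances so that [vm_compute] does not rebuild the product instances
   at every comparison. *)
Definition trans := (bool * letter * bool)%type.
HB.instance Definition _ := Finite.copy trans (bool * letter * bool)%type.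

Definition node := (bool * 'I_7)%type.
HB.instance Definition _ := Finite.copy node (bool * 'I_7)%type.

Lemma card_trans : #|{: trans}| = 12.
Proof. by rewrite !card_prod card_bool cardT enumT unlock. Qed.

Lemma card_node : #|{: node}| = 14.
Proof. by rewrite card_prod card_bool card_ord. Qed.

(* [vm_compute] cannot unfold the locked [enum] and [card] of fintype, so the
   checked predicates use explicit lists, explicit successor functions for [dfs],
   and the literal bounds 14 = #|node| and 12 = #|trans|. *)
Definition all_trans : seq trans :=
  [seq (sx, s') | sx <- [seq (s, x) | s <- [:: false; true], x <- [:: a; b; c]],
                  s' <- [:: false; true]].

Lemma mem_all_trans t : t \in all_trans.
Proof. by case: t => [[[] []] []]. Qed.

Definition period (k : nat) : letter := nth c [:: a; b; c; b; a; c; c] k.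

Definition phases : seq 'I_7 := traject (@ordS 7) ord0 7.

Lemma mem_phases k : k \in phases.
Proof. by case: k => -[|[|[|[|[|[|[|//]]]]]]]. Qed.

Definition phase_edge (T : seq trans) : rel node :=
  fun x y => (y.2 == ordS x.2) && ((x.1, period x.2, y.1) \in T).

Definition phase_succ (T : seq trans) (x : node) : seq node :=
  [seq (t.2, ordS x.2) | t <- T & t.1 == (x.1, period x.2)].

Definition phase_pred (T : seq trans) (y : node) : seq node :=
  [seq (t.1.1, ord_pred y.2) | t <- T & (t.1.2 == period (ord_pred y.2)) && (t.2 == y.1)].

Lemma phase_succ_edge T : grel (phase_succ T) =2 phase_edge T.
Proof.
move=> x [s' k]; apply/mapP/andP => [[t] | [/= /eqP -> xT]].
  rewrite mem_filter => /andP [/eqP tx tT] [-> ->]; split => //.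
  by case: t tx tT => [[u l] v] /= [-> ->].
by exists (x.1, period x.2, s'); rewrite // mem_filter eqxx.
Qed.

Lemma phase_pred_edge T : grel (phase_pred T) =2 [rel y x | phase_edge T x y].
Proof.
move=> y [s k]; rewrite /phase_edge /=; apply/mapP/andP => [[t] | [/eqP -> yT]].
  rewrite mem_filter => /andP [/andP [/eqP tl /eqP ty] tT] [-> ->].
  by rewrite ord_predK; split => //; case: t tl ty tT => [[u l] v] /= -> ->.
by exists (s, period k, y.1); rewrite ?mem_filter ordSK ?eqxx.
Qed.

(* A necessary condition for [T] to be the set of transitions that a run on
   (abcbacc)^ω uses infinitely often: in the product of [T] with the position
   modulo 7, some node at position 0 reaches an occurrence of every transition of
   [T] and is reached back from it. *)
Definition phase_closed (T : seq trans) : bool :=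
  (T != [::]) &&
  has (fun s => let fwd := dfs (phase_succ T) 14 [::] (s, ord0) in
                let bwd := dfs (phase_pred T) 14 [::] (s, ord0) in
       all (fun t => has (fun k : 'I_7 =>
              [&& period k == t.1.2, (t.1.1, k) \in fwd & (t.2, ordS k) \in bwd]) phases) T)
    [:: false; true].

Lemma phase_closed_connect T (x : node) :
  x.2 = ord0 -> T != [::] ->
  (forall t, t \in T -> exists k : 'I_7, [/\ period k = t.1.2,
     connect (phase_edge T) x (t.1.1, k) & connect (phase_edge T) (t.2, ordS k) x]) ->
  phase_closed T.
Proof.
case: x => s _ /= -> T0 HT; rewrite /phase_closed T0.
apply/hasP; exists s; first by case: (s).
apply/allP => t /HT [k [pk fwd bwd]]; apply/hasP; exists k; first exact: mem_phases.
rewrite pk eqxx (mem_dfs _ _ card_node (phase_succ_edge T)) fwd.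
by rewrite (mem_dfs _ _ card_node (phase_pred_edge T)) connect_rev.
Qed.

Definition linked (q : bool) : rel trans :=
  fun e f => (e.2 == f.1.1) && (switch e.1.2 f.1.2 != Some q).

Definition avoid (q : bool) (T : seq trans) : rel trans :=
  fun e f => [&& e \in T, f \in T & linked q e f].

Definition avoid_succ (q : bool) (T : seq trans) (e : trans) : seq trans :=
  if e \in T then [seq f <- T | linked q e f] else [::].

Definition avoid_pred (q : bool) (T : seq trans) (f : trans) : seq trans :=
  if f \in T then [seq e <- T | linked q e f] else [::].

Lemma avoid_succ_edge q T : grel (avoid_succ q T) =2 avoid q T.
Proof.
move=> e f; rewrite /= /avoid_succ /avoid.
by case: (e \in T); rewrite //= mem_filter andbC.
Qed.

Lemma avoid_pred_edge q T : grel (avoid_pred q T) =2 [rel f e | avoid q T e f].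
Proof.
move=> f e; rewrite /= /avoid_pred /avoid.
by case: (f \in T); rewrite ?andbF //= mem_filter andbC.
Qed.

Lemma path_avoid_mem q T x W : path (avoid q T) x W -> {subset W <= T}.
Proof.
elim: W x => [|f W IH] x //= /andP [/and3P [_ fT _] fW] g.
by rewrite inE => /orP [/eqP -> // | /(IH _ fW)].
Qed.

Definition strongly_connected_avoiding (q : bool) (T : seq trans) : bool :=
  if T is e0 :: _ then
    let fwd := dfs (avoid_succ q T) 12 [::] e0 in
    let bwd := dfs (avoid_pred q T) 12 [::] e0 in
    all (fun f => (f \in fwd) && has (fun g => linked q f g && (g \in bwd)) T) T
  else false.

Lemma strongly_connected_avoidingP q T :
  strongly_connected_avoiding q T ->
  exists2 e0, e0 \in T & forall f, f \in T ->
    connect (avoid q T) e0 f /\ exists2 g, avoid q T f g & connect (avoid q T) g e0.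
Proof.
case: T => [|e0 T'] // /allP HT; exists e0; first exact: mem_head.
move=> f fT; have /andP [fwd /hasP [g gT /andP [fg bwd]]] := HT f fT.
split; first by rewrite -(mem_dfs _ _ card_trans (avoid_succ_edge q _)).
exists g; first by rewrite /avoid fT gT.
by move: bwd; rewrite (mem_dfs _ _ card_trans (avoid_pred_edge q _)) connect_rev.
Qed.

Lemma phase_closed_avoiding T :
  T \in subseqs all_trans -> phase_closed T ->
  strongly_connected_avoiding true T || strongly_connected_avoiding false T.
Proof.
have check : all (fun T => phase_closed T ==>
    strongly_connected_avoiding true T || strongly_connected_avoiding false T)
  (subseqs all_trans) by vm_compute.
by move=> /(allP check) /implyP.
Qed.

(** * The lower bound *)

Definition periodic_word : word letter := fun i => period (i %% 7).

Lemma periodic_word_switches q n :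
  exists2 i, n <= i & switch (periodic_word i) (periodic_word i.+1) = Some q.
Proof.
exists (n * 7 + (if q then 0 else 3)).
  by rewrite (leq_trans (leq_pmulr n (isT : 0 < 7))) ?leq_addr.
by rewrite /periodic_word -addnS !modnMDl; case: q.
Qed.

Lemma periodic_word_rejected : ~ accepts phase_automaton periodic_word.
Proof.
move=> /phase_automaton_no_switch [q [n hn]].
have [i hi sw] := periodic_word_switches q n.
by move: (hn i hi); rewrite sw eqxx.
Qed.

Definition phase (i : nat) : 'I_7 := Ordinal (ltn_pmod i (isT : 0 < 7)).

Lemma phaseS i : phase i.+1 = ordS (phase i).
Proof. by apply: val_inj; rewrite /= -[in RHS]addn1 modnDml addn1. Qed.

Lemma phase_mul7 n : phase (n * 7) = ord0.
Proof. by apply: val_inj; rewrite /= modnMl. Qed.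

Definition bool_code (X : finType) (x : X) : bool := index x (enum X) == 1.

Lemma bool_codeK (X : finType) (x0 : X) :
  #|X| <= 2 -> cancel (@bool_code X) (fun q => nth x0 (enum X) q).
Proof.
move=> X_small x; have : index x (enum X) < 2.
  by rewrite (leq_trans _ X_small) // cardE index_mem mem_enum.
by rewrite /bool_code; case: (index x _) (nth_index x0 (mem_enum X x)) => [|[|]].
Qed.

Definition trans_code (X : finType) (e : X * letter * X) : trans :=
  (bool_code e.1.1, e.1.2, bool_code e.2).

Definition trans_decode (X : finType) (x0 : X) (t : trans) : X * letter * X :=
  (nth x0 (enum X) t.1.1, t.1.2, nth x0 (enum X) t.2).

Lemma trans_codeK (X : finType) (x0 : X) :
  #|X| <= 2 -> cancel (@trans_code X) (trans_decode x0).
Proof. by move=> /(bool_codeK x0) K [[s x] s']; rewrite /trans_decode /= !K. Qed.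

Section SmallComplement.
Variable B : automaton letter.
Hypothesis B_genBuchi : is_genBuchi B.
Hypothesis B_complement : forall w, accepts B w <-> ~ accepts phase_automaton w.
Hypothesis B_small : #|st B| <= 2.
Variable rho : nat -> st B * letter * st B.
Hypothesis rho_run : is_run B periodic_word rho.
Hypothesis rho_acc : accepting_run B rho.
Variable N0 : nat.
Hypothesis rho_recurrent :
  forall i, N0 <= i -> forall n, exists2 j, n <= j & (rho j, phase j) = (rho i, phase i).
Variable T : seq trans.
Hypothesis memT : forall t, t \in T <-> exists2 i, N0 * 7 <= i & trans_code (rho i) = t.

Let N := N0 * 7.
Let lift := trans_decode (init B).
Let liftK : cancel (@trans_code _) lift := trans_codeK (init B) B_small.
Let node_of i : node := (bool_code (rho i).1.1, phase i).

Lemma lift_mem t : t \in T -> exists2 i, N <= i & lift t = rho i.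
Proof. by move=> /memT [i hi <-]; exists i; rewrite ?liftK. Qed.

Lemma node_of_edge i : N <= i -> phase_edge T (node_of i) (node_of i.+1).
Proof.
move=> hi; rewrite /phase_edge /= phaseS eqxx; apply/memT; exists i => //.
by have [_ [li ti]] := rho_run.2 i; rewrite /trans_code li ti.
Qed.

Lemma node_of_connect i j :
  N <= i -> i <= j -> connect (phase_edge T) (node_of i) (node_of j).
Proof.
move=> hi /subnKC <-; elim: (j - i) => [|d IH]; first by rewrite addn0.
rewrite addnS; apply: connect_trans IH (connect1 (node_of_edge _)).
exact: leq_trans hi (leq_addr _ _).
Qed.

Lemma inf_trans_phase_closed : phase_closed T.
Proof.
have NT : trans_code (rho N) \in T by apply/memT; exists N.
apply: (@phase_closed_connect _ (node_of N)); first exact: phase_mul7.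
  by apply/eqP => T0; rewrite T0 in NT.
move=> t /memT [i hi <-]; have [_ [li ti]] := rho_run.2 i.
exists (phase i); split; first by rewrite /= li.
  exact: node_of_connect.
have [j hj ej] := rho_recurrent (leq_pmulr N0 (isT : 0 < 7)) i.+1.
have eN : node_of j = node_of N := congr1 (fun p => (bool_code p.1.1.1, p.2) : node) ej.
rewrite -eN /= ti -phaseS.
exact: node_of_connect (leq_trans hi (leqnSn i)) hj.
Qed.

Lemma inf_trans_not_avoiding q : ~ strongly_connected_avoiding q T.
Proof.
move=> /strongly_connected_avoidingP [e0 e0T conn].
have [W [eW lW TW W0]] := covering_closed_walk conn.
have {}W0 : W != [::] by apply: W0; apply/eqP => T0; rewrite T0 in e0T.
have walkT j : cyclic_walk e0 W j \in T.
  by have := cyclic_walk_mem e0 W0 j; rewrite inE => /orP [/eqP -> | /(path_avoid_mem eW)].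
have [i0 hi0 e0i0] := lift_mem e0T.
pose z := fun k => lift (cyclic_walk e0 W k).
have z_step j : delta B (z j) /\ (z j).2 = (z j.+1).1.1.
  split; first by have [i _ zi] := lift_mem (walkT j); rewrite /z zi; case: (rho_run.2 i).
  have /and3P [_ _ /andP [/eqP link _]] := cyclic_walk_step W0 eW lW j.
  by rewrite /z /lift /trans_decode /= link.
have z_rec i n : i0 <= i -> exists2 j, n <= j & z j = rho i.
  move=> hi; have rT : trans_code (rho i) \in T.
    by apply/memT; exists i; first exact: leq_trans hi.
  have [j hj wj] := cyclic_walk_recurrent e0 W0 (TW _ rT) n.
  by exists j; rewrite // /z wj liftK.
apply: (B_complement (fun j => (splice rho i0 z j).1.2)).1.
  exists (splice rho i0 z); split; first exact: (splice_run rho_run e0i0 z_step).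
  exact: splice_accepting B_genBuchi rho_acc z_rec.
apply: phase_automaton_accepts; exists q, i0 => j hj.
rewrite /splice ltnNge hj ltnNge (leq_trans hj) //= subSn //.
by have /and3P [_ _ /andP [_]] := cyclic_walk_step W0 eW lW (j - i0).
Qed.

End SmallComplement.

Lemma genBuchi_complement_states (B : automaton letter) :
  is_genBuchi B -> (forall w, accepts B w <-> ~ accepts phase_automaton w) -> 2 < #|st B|.
Proof.
move=> hB hL; rewrite ltnNge; apply/negP => B_small.
have [rho [rho_run rho_acc]] : accepts B periodic_word.
  by apply/hL; exact: periodic_word_rejected.
have [N0 rec] := eventually_recurrent (fun i => (rho i, phase i)).
have [T T_sub memT] :=
  exists_in_subseqs (fun t => exists2 i, N0 * 7 <= i & trans_code (rho i) = t) all_trans.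
have {}memT t : t \in T <-> exists2 i, N0 * 7 <= i & trans_code (rho i) = t.
  by rewrite memT; split=> [[] | ] //; split; first exact: mem_all_trans.
have T_closed := inf_trans_phase_closed rho_run rec memT.
case/orP: (phase_closed_avoiding T_sub T_closed);
  exact: (inf_trans_not_avoiding hB hL B_small rho_run rho_acc memT).
Qed.

Theorem lemma6 :
  exists (Sigma : finType) (A : automaton Sigma),
    is_genCoBuchi A /\ history_deterministic A /\
    forall B : automaton Sigma,
      is_genBuchi B -> history_deterministic B ->
      (forall w : word Sigma, accepts B w <-> ~ accepts A w) ->
      #|st A| < #|st B|.
Proof.
exists letter, phase_automaton; split; first by [].
split; first exact: phase_automaton_hd.
move=> B hB _ hL; rewrite card_bool; exact: genBuchi_complement_states.
Qed.
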